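(* For every connected graph $G$, $2\,\mathrm{GP}(G)$ is an integer; that is, $\mathrm{GP}(G)$ is either an integer or half of an (odd) integer.
   Context: All graphs are simple and finite. For a connected graph $G$, $d_G(u,v)$ denotes the shortest-path distance and $\mathrm{Aut}(G)$ the automorphism group. The Graovac-Pisanski index is $$\mathrm{GP}(G)=\frac{|V(G)|}{2|\mathrm{Aut}(G)|}\sum_{u\in V(G)}\sum_{\alpha\in \mathrm{Aut}(G)} d_G(u,\alpha(u)).$$ *)

From HB Require Import structures.
From mathcomp Require Import all_boot all_order all_algebra all_fingroup.
Set Implicit Arguments. Unset Strict Implicit. Unset Printing Implicit Defensive.
Import GRing.Theory Num.Theory.

Definition simple_graph (T : finType) (e : rel T) : Prop :=
  symmetric e /\ irreflexive e.

Definition connected_graph (T : finType) (e : rel T) : Prop :=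
  forall x y : T, connect e x y.

Definition walk_of_length (T : finType) (e : rel T) (n : nat) (x y : T) : bool :=
  [exists p : n.-tuple T, path e x p && (last x p == y)].

(* Shortest-path distance: the least n such that a walk of length n from x
   to y exists (searched among 0..#|T|-1, which suffices in a connected
   graph). *)
Definition dist (T : finType) (e : rel T) (x y : T) : nat :=
  find (fun n => walk_of_length e n x y) (iota 0 #|T|).

Definition Aut (T : finType) (e : rel T) : {set {perm T}} :=
  [set s : {perm T} | [forall x, forall y, e (s x) (s y) == e x y]].

Definition GP (T : finType) (e : rel T) : rat :=
  ((#|T|%:R / (2 * #|Aut e|%:R)) *
   (\sum_(u : T) \sum_(a in Aut e) (dist e u (a u))%:R))%R.

(* For a group G of permutations preserving the distance, the displacement sum
   D(u) = sum_(a in G) d(u, a u) equals |G_u| * s(u) with s(u) =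
   sum_(v in Gu) d(u, v), and is constant on orbits.  Summing D over the orbit
   O of u gives |O| * |G_u| * s(u) = |G| * s(u), so |Aut G| divides the double
   sum in GP(G), and 2 GP(G) is |V| times the quotient. *)
From Pilot Require Import Defs.
From mathcomp Require Import all_boot all_order all_algebra all_fingroup.
From mathcomp Require Import ring.
Set Implicit Arguments. Unset Strict Implicit. Unset Printing Implicit Defensive.
Import GRing.Theory Num.Theory.

Section DisplacementSum.
Local Open Scope group_scope.
Variables (T : finType) (G : {group {perm T}}) (f : T -> T -> nat).
Hypothesis f_act : {in G, forall (a : {perm T}) x y, f (a x) (a y) = f x y}.

Definition displacement u := (\sum_(a in G) f u (a u))%N.

Lemma displacement_stab u :
  displacement u = (#|'C_G[u | 'P]| * \sum_(v in orbit 'P G u) f u v)%N.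
Proof.
rewrite /displacement (partition_big_imset (fun a : {perm T} => a u)) /=.
have -> : [set (a : {perm T}) u | a in G] = orbit 'P G u.
  by rewrite orbitE; apply: eq_imset.
rewrite big_distrr /=; apply: eq_bigr => _ /orbitP[b Gb <-].
rewrite (eq_bigr (fun _ => f u ('P%act u b))); last by move=> a /andP[_ /eqP ->].
rewrite big_const iter_addn_0 mulnC; congr muln.
transitivity #|amove 'P G u ('P%act u b)|; first by apply: eq_card => a; rewrite inE.
by rewrite amove_act ?subsetT // card_rcoset.
Qed.

Lemma displacement_act b u : b \in G -> displacement (b u) = displacement u.
Proof.
move=> Gb; have Gb' : b^-1 \in G by rewrite groupV.
rewrite /displacement
  [RHS](reindex_acts 'J (F := fun a : {perm T} => f u (a u)) _ Gb');
  last by rewrite astabsJ normG.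
apply: eq_bigr => a _ /=.
by rewrite -(f_act Gb') permK conjgE invgK !permM.
Qed.

Lemma dvdn_sum_displacement : (#|G| %| \sum_u displacement u)%N.
Proof.
rewrite (eq_bigl [in [set: T]]); last by move=> u; rewrite inE.
rewrite (partition_big_imset (orbit 'P G)) /=.
apply: dvdn_sum => _ /imsetP[u _ ->].
rewrite (eq_bigr (fun _ => displacement u)); last first.
  move=> v /andP[_ /eqP /orbit_eqP /orbitP[b Gb <-]].
  exact: displacement_act.
rewrite big_const iter_addn_0 (@eq_card _ _ (orbit 'P G u)) => [|v]; last first.
  rewrite unfold_in /= in_setT.
  by apply/eqP/idP => [<-|/orbit_eqP]; [exact: orbit_refl|].
by rewrite displacement_stab mulnC mulnA card_orbit_stab dvdn_mulr.
Qed.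

End DisplacementSum.

Section GraphAutomorphisms.
Variables (T : finType) (e : rel T).

Lemma AutP (a : {perm T}) :
  reflect (forall x y, e (a x) (a y) = e x y) (a \in Defs.Aut e).
Proof.
rewrite inE; apply: (iffP forallP) => [H x y | H x].
  exact/eqP/(forallP (H x)).
by apply/forallP => y; rewrite H.
Qed.

Lemma group_set_Aut : group_set (Defs.Aut e).
Proof.
apply/group_setP; split; first by apply/AutP => x y; rewrite !perm1.
by move=> a b /AutP Ha /AutP Hb; apply/AutP => x y; rewrite !permM Hb Ha.
Qed.

Canonical Aut_group := Group group_set_Aut.

Lemma walk_of_length_Aut a n x y : a \in Defs.Aut e ->
  walk_of_length e n x y -> walk_of_length e n (a x) (a y).
Proof.
move=> /AutP Ha /existsP[p /andP[ep /eqP <-]]; apply/existsP.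
exists (map_tuple a p); rewrite /= last_map eqxx andbT.
by case: p ep => s _ /=; elim: s x => //= z s IH x /andP[exz /IH]; rewrite Ha exz.
Qed.

Lemma dist_Aut :
  {in Defs.Aut e, forall (a : {perm T}) x y, dist e (a x) (a y) = dist e x y}.
Proof.
move=> a Ga x y; apply: eq_find => n; apply/idP/idP; last exact: walk_of_length_Aut.
have Ga' : (a^-1)%g \in Aut_group by rewrite groupV.
by move/(walk_of_length_Aut Ga'); rewrite !permK.
Qed.

End GraphAutomorphisms.

Theorem corollary3p3 (T : finType) (e : rel T) :
  simple_graph e -> connected_graph e ->
  exists z : int, (2 * GP e)%R = (z%:~R : rat).
Proof.
move=> _ _.
have [k sum_dist] :=
  dvdnP (@dvdn_sum_displacement _ (Aut_group e) _ (@dist_Aut T e)).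
exists (#|T| * k)%N.
have Aut_neq0 : (#|Defs.Aut e|%:R != 0 :> rat)%R.
  by rewrite pnatr_eq0 -lt0n (cardG_gt0 (Aut_group e)).
have sum_distE : (\sum_u \sum_(a in Defs.Aut e) (dist e u (a u))%:R
                  = (k * #|Defs.Aut e|)%:R :> rat)%R.
  rewrite -[#|Defs.Aut e|]/#|Aut_group e| -sum_dist natr_sum.
  by apply: eq_bigr => u _; rewrite natr_sum.
rewrite /GP sum_distE pmulrn !natrM.
by field.
Qed.
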